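(* Let $G$ be a graph whose twin graph $G^*$ is isomorphic to $K_3$ and has at most one vertex of type (1K). Then $D(G)=n(G)-2$ if and only if $G$ is isomorphic to $K_{1,2,2}$ or to $K_{1,1,t}$ for some $t\ge 2$.
   Context: All graphs are finite and simple; $n(G)=|V(G)|$; $N_G(u)$ is the neighborhood of $u$; $K_{a,b,c}$ is the complete tripartite graph. A distinguishing coloring of a graph $G$ is a (not necessarily proper) vertex coloring such that the only automorphism of $G$ mapping every vertex to a vertex of the same color is the identity; the distinguishing number $D(G)$ is the minimum number of colors in a distinguishing coloring of $G$. Two distinct vertices $u,v$ are twins if $N_G(u)\setminus\{v\}=N_G(v)\setminus\{u\}$. The relation $u\equiv v$ iff $u=v$ or $u,v$ are twins is an equivalence relation; the class of $v$ is denoted $v^*$. The twin graph $G^*$ has the equivalence classes as vertices, distinct classes $u^*,v^*$ being adjacent iff $uv\in E(G)$. Each class induces a complete or an edgeless graph. A class $v^*$ is of type (1) if $|v^*|=1$, of type (K) if $|v^*|\ge 2$ and it induces a complete graph, and of type (N) if $|v^*|\ge2$ and it induces an edgeless graph; type (1K) means type (1) or (K), type (1N) means (1) or (N), and type (KN) means (K) or (N). *)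

From mathcomp Require Import all_boot fingroup perm.
Set Implicit Arguments. Unset Strict Implicit. Unset Printing Implicit Defensive.

Section Graphs.
Variable T : finType.
Variable e : rel T.

Definition simple_graph : Prop := symmetric e /\ irreflexive e.

Definition is_autb (s : {perm T}) : bool :=
  [forall x, forall y, e (s x) (s y) == e x y].

Definition distinguishingb (k : nat) (c : {ffun T -> 'I_k}) : bool :=
  [forall s : {perm T}, (is_autb s && [forall x, c (s x) == c x]) ==> (s == 1%g)].

Definition has_dcol (k : nat) : bool :=
  [exists c : {ffun T -> 'I_k}, distinguishingb c].

Lemma has_dcol_card : exists k, has_dcol k.
Proof.
exists #|T|; apply/existsP; exists [ffun x => enum_rank x].
apply/forallP=> s; apply/implyP=> /andP[_ /forallP H].
apply/eqP/permP=> x; rewrite perm1.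
by have := H x; rewrite !ffunE => /eqP/enum_rank_inj.
Qed.

Definition dist_number : nat := ex_minn has_dcol_card.

Definition twins (u v : T) : bool :=
  (u != v) && ([set w | e u w] :\ v == [set w | e v w] :\ u).

Definition twin_eq (u v : T) : bool := (u == v) || twins u v.

Definition twin_class (v : T) : {set T} := [set u | twin_eq v u].

Definition twin_classes : {set {set T}} := [set twin_class v | v in T].

Definition twin_adj (A B : {set T}) : bool :=
  (A != B) && [exists u in A, exists v in B, e u v].

Definition twin_graph_K3 : Prop :=
  #|twin_classes| = 3 /\
  forall A B, A \in twin_classes -> B \in twin_classes -> A != B -> twin_adj A B.

Definition type1K (A : {set T}) : bool :=
  (#|A| == 1) ||
  ((2 <= #|A|) && [forall u in A, forall v in A, (u != v) ==> e u v]).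

End Graphs.

Definition graph_iso (T T' : finType) (e : rel T) (e' : rel T') : Prop :=
  exists f : T -> T', bijective f /\ forall x y, e' (f x) (f y) = e x y.

Definition tri_part (a b c : nat) (x : ('I_a + 'I_b) + 'I_c) : nat :=
  match x with
  | inl (inl _) => 0
  | inl (inr _) => 1
  | inr _ => 2
  end.

Definition Ktri_vert (a b c : nat) : finType := (('I_a + 'I_b) + 'I_c)%type.

Definition Ktri (a b c : nat) : rel (Ktri_vert a b c) :=
  fun x y => tri_part x != tri_part y.
Arguments Ktri : clear implicits.

From mathcomp Require Import all_boot fingroup perm zify.
Set Implicit Arguments. Unset Strict Implicit. Unset Printing Implicit Defensive.

(* The three twin classes of G are modules, pairwise completely joined; two of
   them are independent of sizes a, b >= 2 and the third has size c >= 1.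
   A colour-preserving automorphism maps twin classes to twin classes with the
   same colour image, so colouring each class injectively by a cyclic interval of
   colours starting at its own index is distinguishing; this needs only
   max(3, n - 3) colours.  Hence D(G) = n - 2 forces n = 5, i.e. G = K_{1,2,2};
   conversely, in K_{1,2,2} two colours cannot separate the two parts of size 2.
   K_{1,1,t} never qualifies, since all its non-edges lie inside one part. *)

Section Twins.
Variables (T : finType) (e : rel T).
Hypotheses (e_sym : symmetric e) (e_irr : irreflexive e).

Lemma twin_eqP u v :
  reflect (forall w, w != u -> w != v -> e u w = e v w) (twin_eq e u v).
Proof.
rewrite /twin_eq /twins; case: eqVneq => [<-|neq_uv] /=; first by left.
apply: (iffP eqP) => [/setP eq_nbh w wu wv | eq_nbh].
  by have := eq_nbh w; rewrite !inE wu wv.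
apply/setP => w; rewrite !inE.
case: (eqVneq w v) => [->|wv]; first by rewrite e_irr andbF.
case: (eqVneq w u) => [->|wu]; first by rewrite e_irr.
by rewrite eq_nbh.
Qed.

Lemma twin_eq_refl u : twin_eq e u u.
Proof. exact/twin_eqP. Qed.

Lemma twin_eq_sym u v : twin_eq e u v = twin_eq e v u.
Proof.
by apply/twin_eqP/twin_eqP => eq_nbh w wu wv; rewrite eq_nbh.
Qed.

Lemma twin_eq_trans v u w : twin_eq e u v -> twin_eq e v w -> twin_eq e u w.
Proof.
move=> /twin_eqP tuv /twin_eqP tvw.
case: (eqVneq u v) => [->|uv]; first exact/twin_eqP.
case: (eqVneq v w) => [<-|vw]; first exact/twin_eqP.
case: (eqVneq u w) => [->|uw]; first exact: twin_eq_refl.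
apply/twin_eqP => x xu xw; case: (eqVneq x v) => [->|xv]; last by rewrite tuv ?tvw.
have wv : w != v by rewrite eq_sym.
by rewrite [e u v]e_sym (tvw u) // [e w u]e_sym tuv // eq_sym.
Qed.

Lemma mem_twin_class u v : (v \in twin_class e u) = twin_eq e u v.
Proof. by rewrite inE. Qed.

Lemma twin_class_eq u v : (twin_class e u == twin_class e v) = twin_eq e u v.
Proof.
apply/eqP/idP => [eq_uv|tuv].
  by have := twin_eq_refl v; rewrite -mem_twin_class -eq_uv mem_twin_class.
apply/setP => x; rewrite !inE; apply/idP/idP; last exact: twin_eq_trans.
by apply: twin_eq_trans; rewrite twin_eq_sym.
Qed.

Lemma twin_eq_edge u x w : twin_eq e u x -> ~~ twin_eq e u w -> e u w = e x w.
Proof.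
move=> tux nuw; apply/(twin_eqP _ _ tux).
  by apply: contraNneq nuw => ->; apply: twin_eq_refl.
by apply: contraNneq nuw => ->.
Qed.

Lemma autP (s : {perm T}) :
  reflect (forall x y, e (s x) (s y) = e x y) (is_autb e s).
Proof.
apply: (iffP forallP) => [aut_s x y | aut_s x]; first exact/eqP/(forallP (aut_s x)).
by apply/forallP => y; rewrite aut_s.
Qed.

Lemma aut_invg (s : {perm T}) : is_autb e s -> is_autb e s^-1.
Proof.
by move=> /autP aut_s; apply/autP => x y; rewrite -aut_s !permKV.
Qed.

Lemma aut_twin_eq (s : {perm T}) u v :
  is_autb e s -> twin_eq e u v -> twin_eq e (s u) (s v).
Proof.
move=> /autP aut_s /twin_eqP tuv; apply/twin_eqP => w wu wv.
rewrite -(permKV s w) !aut_s tuv //.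
  by apply: contraNneq wu => <-; rewrite permKV.
by apply: contraNneq wv => <-; rewrite permKV.
Qed.

Lemma aut_twin_eqE (s : {perm T}) u v :
  is_autb e s -> twin_eq e (s u) (s v) = twin_eq e u v.
Proof.
move=> aut_s; apply/idP/idP; last exact: aut_twin_eq.
by move/(aut_twin_eq (aut_invg aut_s)); rewrite !permK.
Qed.

Lemma twin_class_aut (s : {perm T}) x :
  is_autb e s -> twin_class e (s x) = s @: twin_class e x.
Proof.
move=> aut_s; apply/setP => y.
by rewrite -(permKV s y) mem_imset ?mem_twin_class ?aut_twin_eqE //; exact: perm_inj.
Qed.

Lemma tperm_twin_aut u v : twin_eq e u v -> is_autb e (tperm u v).
Proof.
move/twin_eqP => tuv; apply/autP => x y.
case: tpermP => [->|->|/eqP xu /eqP xv]; case: tpermP => [->|->|/eqP yu /eqP yv];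
  by rewrite ?e_irr // ?[e _ u]e_sym ?[e _ v]e_sym ?tuv.
Qed.

Lemma distinguishing_twin_inj k (col : {ffun T -> 'I_k}) u v :
  distinguishingb e col -> twin_eq e u v -> col u = col v -> u = v.
Proof.
move=> /forallP dist_col tuv col_uv.
have col_t : [forall x, col (tperm u v x) == col x].
  by apply/forallP => x; case: tpermP => [->|->|//]; rewrite col_uv.
have := dist_col (tperm u v); rewrite tperm_twin_aut // col_t => /eqP/permP/(_ u).
by rewrite tpermL perm1.
Qed.

Lemma distinguishing_twin_classes k (col : {ffun T -> 'I_k}) :
  (forall x y, twin_eq e x y -> col x = col y -> x = y) ->
  (forall x y, col @: twin_class e x = col @: twin_class e y -> twin_eq e x y) ->
  distinguishingb e col.
Proof.
move=> col_inj col_classes; apply/forallP => s.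
apply/implyP => /andP[aut_s /forallP col_s]; apply/eqP/permP => x; rewrite perm1.
have col_sE y : col (s y) = col y by apply/eqP/col_s.
apply: col_inj (col_sE x); apply: col_classes.
by rewrite twin_class_aut // -imset_comp; apply: eq_imset => y; apply: col_sE.
Qed.

Lemma twin_adj_edge x y : twin_adj e (twin_class e x) (twin_class e y) -> e x y.
Proof.
case/andP => /negbTE ncl /exists_inP[u + /exists_inP[v + e_uv]].
rewrite !mem_twin_class => txu tyv; have nxy : ~~ twin_eq e x y by rewrite -twin_class_eq ncl.
rewrite (twin_eq_edge txu nxy) e_sym (twin_eq_edge tyv) 1?e_sym //.
by apply: contra nxy => tyu; apply: twin_eq_trans txu _; rewrite twin_eq_sym.
Qed.

Lemma twin_class_edge_const v x y u w :
  x \in twin_class e v -> y \in twin_class e v ->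
  u \in twin_class e v -> w \in twin_class e v ->
  x != y -> u != w -> e x y = e u w.
Proof.
have twin a b : a \in twin_class e v -> b \in twin_class e v -> twin_eq e a b.
  by rewrite !mem_twin_class => tva tvb; apply: twin_eq_trans tvb; rewrite twin_eq_sym.
have move_end a b c : a \in twin_class e v -> b \in twin_class e v ->
    c \in twin_class e v -> a != b -> a != c -> e a b = e a c.
  move=> aC bC cC ab ac; case: (eqVneq b c) => [-> // | bc].
  by rewrite [e a b]e_sym (twin_eqP _ _ (twin _ _ bC cC)) // e_sym.
move=> xC yC uC wC xy uw; case: (eqVneq u y) => [yu | uy].
  by subst u; rewrite e_sym (move_end y x w) // eq_sym.
by rewrite e_sym (move_end y x u) 1?eq_sym // e_sym (move_end u y w).
Qed.

Lemma not_type1K_indep v : ~~ type1K e (twin_class e v) ->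
  1 < #|twin_class e v| /\ {in twin_class e v &, forall x y, ~~ e x y}.
Proof.
rewrite /type1K negb_or => /andP[n1 not_complete].
have vC : v \in twin_class e v by rewrite mem_twin_class twin_eq_refl.
have gt1 : 1 < #|twin_class e v|.
  have : 0 < #|twin_class e v| by apply/card_gt0P; exists v.
  lia.
split=> //; move: not_complete; rewrite gt1 /= => /forall_inPn[u uC /forall_inPn[w wC]].
rewrite negb_imply => /andP[uw nuw] x y xC yC.
by case: (eqVneq x y) => [->|xy]; rewrite ?e_irr // (twin_class_edge_const xC yC uC wC).
Qed.

End Twins.

Definition fiber (T : finType) (q : T -> nat) (p : nat) : {set T} := [set x | q x == p].

Lemma two_outside_pred (U : finType) (S : {set U}) (P : pred U) :
  #|[set x in S | P x]| <= 1 -> 2 < #|S| ->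
  exists x y, [/\ x \in S, y \in S, x != y, ~~ P x & ~~ P y].
Proof.
move=> fewP bigS.
have : 1 < #|[set x in S | ~~ P x]|.
  have := cardsID [set x | P x] S.
  have -> : S :&: [set x | P x] = [set x in S | P x] by apply/setP => x; rewrite !inE.
  have -> : S :\: [set x | P x] = [set x in S | ~~ P x] by apply/setP => x; rewrite !inE andbC.
  lia.
case/card_gt1P => x [y [+ + xy]]; rewrite !inE => /andP[Sx Px] /andP[Sy Py].
by exists x, y.
Qed.

Lemma card3_third (U : finType) (S : {set U}) A B :
  #|S| = 3 -> A \in S -> B \in S -> A != B ->
  exists C, [/\ C \in S, C != A, C != B & {subset S <= [:: C; A; B]}].
Proof.
move=> card3 SA SB AB.
have : #|S :\ A :\ B| == 1.
  by have := cardsD1 A S; have := cardsD1 B (S :\ A); rewrite SA !inE eq_sym AB SB; lia.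
case/cards1P => C S_AB; have : C \in S :\ A :\ B by rewrite S_AB set11.
rewrite !inE => /and3P[CB CA SC]; exists C; split=> // X SX; rewrite !inE.
case: (eqVneq X A) => [-> | XA]; rewrite ?eqxx ?orbT //.
case: (eqVneq X B) => [-> | XB]; rewrite ?eqxx ?orbT //.
have : X \in S :\ A :\ B by rewrite !inE XA XB SX.
by rewrite S_AB inE => ->.
Qed.

(* Label each vertex by the position of its twin class in [:: C; A; B], where
   A and B are two classes that are not of type (1K). *)
Lemma twin_K3_labelling (T : finType) (e : rel T) :
  symmetric e -> irreflexive e -> twin_graph_K3 e ->
  #|[set A in twin_classes e | type1K e A]| <= 1 ->
  exists q : T -> nat, [/\ forall x, q x < 3,
    forall x y, twin_eq e x y = (q x == q y),
    forall x y, q x != q y -> e x y,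
    forall x y, q x = q y -> q x != 0 -> ~~ e x y &
    [/\ 1 < #|fiber q 1|, 1 < #|fiber q 2| & 0 < #|fiber q 0|]].
Proof.
move=> e_sym e_irr [card3 adj] few1K.
have [A [B [SA SB AB nA nB]]] : exists A B, [/\ A \in twin_classes e, B \in twin_classes e,
    A != B, ~~ type1K e A & ~~ type1K e B] by apply: two_outside_pred; rewrite ?card3.
have [C [SC CA CB S_sub]] := card3_third card3 SA SB AB.
pose s := [:: C; A; B]; pose q x := index (twin_class e x) s.
have S_cl x : twin_class e x \in twin_classes e by apply: imset_f.
have s_cl x : twin_class e x \in s by apply/S_sub/S_cl.
have qE x y : twin_eq e x y = (q x == q y).
  rewrite -(twin_class_eq e_sym e_irr).
  by apply/eqP/eqP => [/(congr1 (index^~ s)) | /(index_inj A (s_cl x) (s_cl y))].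
have fiber_q v : fiber q (q v) = twin_class e v.
  by apply/setP => x; rewrite !inE qE eq_sym.
case/imsetP: SA => va _ Aeq; case/imsetP: SB => vb _ Beq; case/imsetP: SC => vc _ Ceq.
have qva : q va = 1 by rewrite /q -Aeq /= (negbTE CA) eqxx.
have qvb : q vb = 2 by rewrite /q -Beq /= (negbTE CB) (negbTE AB) eqxx.
have qvc : q vc = 0 by rewrite /q -Ceq /= eqxx.
move: nA nB; rewrite Aeq Beq => /(not_type1K_indep e_sym e_irr)[A2 indepA].
move=> /(not_type1K_indep e_sym e_irr)[B2 indepB].
have q_lt3 x : q x < 3 by rewrite -[3]/(size s) index_mem.
exists q; split=> //.
- move=> x y; rewrite -qE -(twin_class_eq e_sym e_irr) => ncl.
  by apply/(twin_adj_edge e_sym e_irr)/adj.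
- move=> x y /eqP; rewrite -qE => txy nz.
  have [xC yC] : x \in fiber q (q x) /\ y \in fiber q (q x) by rewrite !inE eqxx eq_sym -qE.
  have : (q x == q va) || (q x == q vb).
    by rewrite qva qvb; move: (q_lt3 x) nz; case: (q x) => [|[|[|]]].
  by case/orP => /eqP qx; [apply: indepA | apply: indepB]; rewrite -fiber_q -qx.
have -> : fiber q 1 = twin_class e va by rewrite -qva fiber_q.
have -> : fiber q 2 = twin_class e vb by rewrite -qvb fiber_q.
have -> : fiber q 0 = twin_class e vc by rewrite -qvc fiber_q.
by split=> //; apply/card_gt0P; exists vc; rewrite mem_twin_class twin_eq_refl.
Qed.

Section FiberRank.
Variables (T : finType) (q : T -> nat).

Definition fiber_rank x := index x (enum (fiber q (q x))).

Lemma fiber_rank_lt x : fiber_rank x < #|fiber q (q x)|.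
Proof. by rewrite /fiber_rank cardE index_mem mem_enum inE. Qed.

Lemma fiber_rank_inj x y : q x = q y -> fiber_rank x = fiber_rank y -> x = y.
Proof.
rewrite /fiber_rank => qxy; rewrite qxy; by apply: (index_inj x); rewrite mem_enum inE ?qxy.
Qed.

Lemma fiber_rank_onto p i : i < #|fiber q p| -> exists2 y, q y = p & fiber_rank y = i.
Proof.
rewrite cardE => lt_i; have y0 : T by case: (enum (fiber q p)) lt_i.
have := mem_nth y0 lt_i; set y := nth y0 _ i.
rewrite mem_enum inE => /eqP qy; exists y => //.
by rewrite /fiber_rank qy index_uniq ?enum_uniq.
Qed.

End FiberRank.

Definition cshift (k p i : nat) := if i + p < k then i + p else i + p - k.

Definition cyclic_interval (k p m : nat) := [seq cshift k p i | i <- iota 0 m].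

Lemma cyclic_intervalP k p m j :
  reflect (exists2 i, i < m & j = cshift k p i) (j \in cyclic_interval k p m).
Proof.
by apply: (iffP mapP) => -[i lt_i ->]; exists i => //; move: lt_i; rewrite mem_iota.
Qed.

(* The start [p'] of the later interval is either outside the earlier one, or
   inside it together with its cyclic predecessor, which the later one misses. *)
Lemma cyclic_interval_neq k m p p' : p < k -> p' < k -> p != p' -> 0 < m < k ->
  exists2 j, j < k & (j \in cyclic_interval k p m) != (j \in cyclic_interval k p' m).
Proof.
wlog lt_pp' : p p' / p < p' => [wlog_lt | lt_pk lt_p'k _ lt_m].
  move=> lt_pk lt_p'k pp' lt_m; case: (ltngtP p p') => [lt | gt | eq_pp']; first exact: wlog_lt.
    have [j lt_j] := wlog_lt p' p gt lt_p'k lt_pk (negbT (ltn_eqF gt)) lt_m.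
    by exists j; rewrite // eq_sym.
  by rewrite eq_pp' eqxx in pp'.
case: (boolP (p' \in cyclic_interval k p m)) => [/cyclic_intervalP[i lt_i def_p'] | p'_out].
  exists p'.-1; first lia.
  have -> : p'.-1 \in cyclic_interval k p m.
    apply/cyclic_intervalP; exists i.-1; first lia.
    by move: def_p'; rewrite /cshift; do 2 case: ifP; lia.
  apply/negP => /cyclic_intervalP[i' lt_i']; rewrite /cshift; case: ifP; lia.
have p'_in : p' \in cyclic_interval k p' m.
  by apply/cyclic_intervalP; exists 0; [lia | rewrite /cshift; case: ifP; lia].
by exists p' => //; rewrite (negbTE p'_out) p'_in.
Qed.

Section CyclicColoring.
Variables (T : finType) (e : rel T) (q : T -> nat) (k : nat).
Hypothesis e_irr : irreflexive e.
Hypotheses (q_lt3 : forall x, q x < 3)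
  (twin_eq_fiber : forall x y, twin_eq e x y = (q x == q y)).
Hypotheses (k_gt2 : 2 < k) (fiber_le : forall p, p < 3 -> #|fiber q p| <= k)
  (equal_fibers_lt : forall p p', p < 3 -> p' < 3 -> p != p' ->
     #|fiber q p| = #|fiber q p'| -> #|fiber q p| < k).

Lemma cyclic_color_lt x : cshift k (q x) (fiber_rank q x) < k.
Proof.
have := fiber_rank_lt q x; have := fiber_le (q_lt3 x); have := q_lt3 x.
rewrite /cshift; case: ifP; lia.
Qed.

Definition cyclic_coloring : {ffun T -> 'I_k} := [ffun x => Ordinal (cyclic_color_lt x)].

Lemma cyclic_coloring_fiber_inj x y :
  q x = q y -> cyclic_coloring x = cyclic_coloring y -> x = y.
Proof.
move=> qxy /(congr1 val); rewrite !ffunE /= => eq_col; apply: (fiber_rank_inj qxy).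
have := fiber_rank_lt q x; have := fiber_rank_lt q y; have := fiber_le (q_lt3 x).
by move: eq_col; rewrite /cshift qxy; do 2 case: ifP; lia.
Qed.

Lemma twin_class_fiber x : twin_class e x = fiber q (q x).
Proof. by apply/setP => y; rewrite !inE twin_eq_fiber eq_sym. Qed.

Lemma mem_cyclic_coloring_fiber p (j : 'I_k) :
  (j \in cyclic_coloring @: fiber q p) = (val j \in cyclic_interval k p #|fiber q p|).
Proof.
apply/imsetP/cyclic_intervalP => [[x + ->] | [i lt_i def_j]].
  by rewrite inE => /eqP <-; exists (fiber_rank q x); rewrite ?ffunE ?fiber_rank_lt.
have [y qy rank_y] := fiber_rank_onto lt_i.
by exists y; rewrite ?inE ?qy //; apply: val_inj; rewrite ffunE /= qy rank_y.
Qed.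

Lemma cyclic_coloring_classes x y :
  cyclic_coloring @: twin_class e x = cyclic_coloring @: twin_class e y -> twin_eq e x y.
Proof.
rewrite !twin_class_fiber twin_eq_fiber => eq_im; apply: contraT => qxy.
have card_im p : #|cyclic_coloring @: fiber q p| = #|fiber q p|.
  apply: card_in_imset => u v; rewrite !inE => /eqP qu /eqP qv.
  by apply: cyclic_coloring_fiber_inj; rewrite qu qv.
have eq_card : #|fiber q (q x)| = #|fiber q (q y)| by rewrite -!card_im eq_im.
have fx : 0 < #|fiber q (q x)| by apply/card_gt0P; exists x; rewrite inE.
have lt_m : 0 < #|fiber q (q x)| < k by rewrite fx (equal_fibers_lt (q_lt3 x) (q_lt3 y)).
have [j lt_j] :=
  cyclic_interval_neq (leq_trans (q_lt3 x) k_gt2) (leq_trans (q_lt3 y) k_gt2) qxy lt_m.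
rewrite -[j]/(val (Ordinal lt_j)) {2}eq_card -!mem_cyclic_coloring_fiber.
by rewrite eq_im eqxx.
Qed.

Lemma has_dcol_cyclic : has_dcol e k.
Proof.
apply/existsP; exists cyclic_coloring; apply: distinguishing_twin_classes => //.
  by move=> x y; rewrite twin_eq_fiber => /eqP; apply: cyclic_coloring_fiber_inj.
exact: cyclic_coloring_classes.
Qed.

End CyclicColoring.

Lemma card_fibers3 (T : finType) (q : T -> nat) : (forall x, q x < 3) ->
  #|T| = #|fiber q 0| + #|fiber q 1| + #|fiber q 2|.
Proof.
move=> q_lt3; rewrite -cardsT -(cardsID (fiber q 0)) -(cardsID (fiber q 1) (_ :\: _)) -addnA.
congr (_ + (_ + _)); apply: eq_card => x; rewrite !inE;
  by move: (q_lt3 x); case: (q x) => [|[|[|]]].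
Qed.

Lemma imset_inj_on_setT (U : finType) k (f : U -> 'I_k) (A : {set U}) :
  {in A &, injective f} -> k <= #|A| -> f @: A = setT.
Proof.
by move=> f_inj le_k; apply/eqP; rewrite eqEcard subsetT cardsT card_ord card_in_imset.
Qed.

Lemma matching_perm (T : finType) (C : eqType) (q : T -> nat) (col : T -> C)
    (sw : nat -> nat) :
  involutive sw -> (forall x y, q x = q y -> col x = col y -> x = y) ->
  (forall x, exists y, q y = sw (q x) /\ col y = col x) ->
  exists s : {perm T}, forall x, q (s x) = sw (q x) /\ col (s x) = col x.
Proof.
move=> swK col_inj match_ex.
pose partner x := odflt x [pick y | (q y == sw (q x)) && (col y == col x)].
have partnerP x : q (partner x) = sw (q x) /\ col (partner x) = col x.
  rewrite /partner; case: pickP => [y /andP[/eqP -> /eqP ->] // | none].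
  by have [y [qy cy]] := match_ex x; have := none y; rewrite qy cy !eqxx.
have partnerK : involutive partner.
  move=> x; have [q1 c1] := partnerP x; have [q2 c2] := partnerP (partner x).
  by apply: (col_inj _ _ _ (etrans c2 c1)); rewrite q2 q1 swK.
by exists (perm (inv_inj partnerK)) => x; rewrite permE.
Qed.

Section CompleteTripartite.
Variables (T : finType) (e : rel T) (q : T -> nat).
Hypotheses (q_lt3 : forall x, q x < 3) (e_fiber : forall x y, e x y = (q x != q y)).

Lemma complete_tripartite_iso a b c :
  #|fiber q 0| = a.+1 -> #|fiber q 1| = b.+1 -> #|fiber q 2| = c.+1 ->
  graph_iso e (Ktri a.+1 b.+1 c.+1).
Proof.
move=> card0 card1 card2.
pose f x : Ktri_vert a.+1 b.+1 c.+1 := match q x with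
  | 0 => inl (inl (inord (fiber_rank q x)))
  | 1 => inl (inr (inord (fiber_rank q x)))
  | _ => inr (inord (fiber_rank q x)) end.
have part_f x : tri_part (f x) = q x by rewrite /f; move: (q_lt3 x); case: (q x) => [|[|[|]]].
have f_inj : injective f.
  move=> x y fxy; have qxy : q x = q y by rewrite -!part_f fxy.
  apply: (fiber_rank_inj qxy); move: fxy (fiber_rank_lt q x) (fiber_rank_lt q y).
  rewrite /f -qxy; move: (q_lt3 x); case: (q x) => [|[|[|]]] // _;
    rewrite ?card0 ?card1 ?card2 => -[/(congr1 (@nat_of_ord _))] eq_r lt_x lt_y;
    by rewrite !inordK in eq_r.
exists f; split; last by move=> x y; rewrite /Ktri !part_f e_fiber.
apply: (inj_card_bij f_inj).
by rewrite (card_fibers3 q_lt3) card0 card1 card2 /Ktri_vert !card_sum !card_ord.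
Qed.

Definition swap_parts (p p' r : nat) := if r == p then p' else if r == p' then p else r.

Lemma swap_partsK p p' : involutive (swap_parts p p').
Proof.
by move=> r; rewrite /swap_parts; repeat case: ifP; lia.
Qed.

(* Two parts of the same size [m] cannot be told apart with at most [m] colours:
   each part then uses every colour exactly once, so matching equal colours
   across the two parts is a colour-preserving automorphism. *)
Lemma complete_tripartite_dist_gt p p' k :
  p != p' -> 0 < #|fiber q p| -> #|fiber q p| = #|fiber q p'| ->
  has_dcol e k -> #|fiber q p| < k.
Proof.
move=> pp' fp_gt0 eq_card /existsP[col dist_col]; rewrite ltnNge; apply/negP => le_k.
have e_irr : irreflexive e by move=> x; rewrite e_fiber eqxx.
have e_sym : symmetric e by move=> x y; rewrite !e_fiber eq_sym.
have col_inj x y : q x = q y -> col x = col y -> x = y.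
  move=> qxy; apply: (distinguishing_twin_inj e_sym e_irr dist_col).
  by apply/(twin_eqP e_irr) => w _ _; rewrite !e_fiber qxy.
have col_onto r (j : 'I_k) : #|fiber q r| = #|fiber q p| -> exists2 y, q y = r & col y = j.
  move=> card_r; have : j \in col @: fiber q r.
    rewrite (imset_inj_on_setT _ (leq_trans le_k _)) ?card_r //.
    by move=> u v; rewrite !inE => /eqP qu /eqP qv; apply: col_inj; rewrite qu qv.
  by case/imsetP => y; rewrite inE => /eqP qy ->; exists y.
have [s sP] : exists s : {perm T},
    forall x, q (s x) = swap_parts p p' (q x) /\ col (s x) = col x.
  apply: (matching_perm (@swap_partsK p p') col_inj) => x.
  rewrite /swap_parts; case: eqVneq => [_ | _]; last case: eqVneq => [_ | _].
  - by have [y] := col_onto p' (col x) (esym eq_card); exists y.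
  - by have [y] := col_onto p (col x) erefl; exists y.
  - by exists x.
have aut_s : is_autb e s.
  apply/autP => x y; rewrite !e_fiber (sP x).1 (sP y).1.
  by rewrite (inj_eq (inv_inj (@swap_partsK p p'))).
have col_s : [forall x, col (s x) == col x] by apply/forallP => x; rewrite (sP x).2.
have /eqP s1 := implyP (forallP dist_col s) (introT andP (conj aut_s col_s)).
have /card_gt0P[x] := fp_gt0; rewrite inE => /eqP qx.
by have := (sP x).1; rewrite s1 perm1 qx /swap_parts eqxx => /eqP; rewrite (negbTE pp').
Qed.

End CompleteTripartite.

Lemma graph_iso_card (T T' : finType) (e : rel T) (e' : rel T') :
  graph_iso e e' -> #|T| = #|T'|.
Proof. by case=> f [f_bij _]; apply: bij_eq_card f_bij. Qed.

Lemma card_Ktri a b c : #|Ktri_vert a b c| = a + b + c.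
Proof. by rewrite /Ktri_vert !card_sum !card_ord. Qed.

Lemma Ktri11_nonedge t (x y : Ktri_vert 1 1 t) :
  x != y -> ~~ Ktri 1 1 t x y -> tri_part x = 2.
Proof.
by case: x => [[i|i]|i]; case: y => [[j|j]|j]; rewrite /Ktri ?(ord1 i) ?(ord1 j) //= negbK eqxx.
Qed.

Lemma dist_number_le (T : finType) (e : rel T) k : has_dcol e k -> dist_number e <= k.
Proof. by rewrite /dist_number; case: ex_minnP => m _; apply. Qed.

Lemma has_dcol_dist_number (T : finType) (e : rel T) : has_dcol e (dist_number e).
Proof. by rewrite /dist_number; case: ex_minnP. Qed.

Section Labelled.
Variables (T : finType) (e : rel T) (q : T -> nat).
Hypotheses (q_lt3 : forall x, q x < 3)
  (cross : forall x y, q x != q y -> e x y)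
  (indep : forall x y, q x = q y -> q x != 0 -> ~~ e x y)
  (card1 : 1 < #|fiber q 1|) (card2 : 1 < #|fiber q 2|) (card0 : 0 < #|fiber q 0|).

Lemma not_iso_Ktri11 t : ~ graph_iso e (Ktri 1 1 t).
Proof.
case=> f [/bij_inj f_inj f_edge].
have third p x y : q x = p -> q y = p -> p != 0 -> x != y -> tri_part (f x) = 2.
  move=> qx qy p0 xy; apply: (Ktri11_nonedge (y := f y)); first by rewrite (inj_eq f_inj).
  by rewrite f_edge indep // ?qx ?qy.
have [a1 [a2 [+ + a12]]] := card_gt1P card1; rewrite !inE => /eqP qa1 /eqP qa2.
have [b1 [b2 [+ + b12]]] := card_gt1P card2; rewrite !inE => /eqP qb1 /eqP qb2.
have := f_edge a1 b1; rewrite cross ?qa1 ?qb1 // /Ktri.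
by rewrite (third 1 a1 a2) // (third 2 b1 b2).
Qed.

Hypothesis twin_eq_fiber : forall x y, twin_eq e x y = (q x == q y).
Hypothesis e_irr : irreflexive e.

Lemma dist_number_labelled_le : dist_number e <= maxn 3 (#|T| - 3).
Proof.
apply/dist_number_le/(has_dcol_cyclic e_irr q_lt3 twin_eq_fiber);
  rewrite (card_fibers3 q_lt3); first lia.
  by case=> [|[|[|]]] //= _; lia.
move=> p p'; case: p => [|[|[|]]] //; case: p' => [|[|[|]]] //= *; lia.
Qed.

Lemma labelled_complete : #|fiber q 0| = 1 -> forall x y, e x y = (q x != q y).
Proof.
move=> /eqP/cards1P[z fiber0] x y; case: (eqVneq (q x) (q y)) => [qxy | /cross //].
case: (eqVneq (q x) 0) => [qx0 | /(indep qxy)/negbTE //].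
have : x \in fiber q 0 /\ y \in fiber q 0 by rewrite !inE -qxy qx0.
by rewrite fiber0 !inE => -[/eqP-> /eqP->]; rewrite e_irr.
Qed.

End Labelled.

Theorem lemma4p5 (T : finType) (e : rel T) :
  simple_graph e ->
  twin_graph_K3 e ->
  #|[set A in twin_classes e | type1K e A]| <= 1 ->
  (dist_number e = #|T| - 2 <->
   graph_iso e (Ktri 1 2 2) \/ (exists t, 2 <= t /\ graph_iso e (Ktri 1 1 t))).
Proof.
move=> [e_sym e_irr] K3 few1K.
have [q [q_lt3 twin_q cross indep [card1 card2 card0]]] :=
  twin_K3_labelling e_sym e_irr K3 few1K.
have cardT := card_fibers3 q_lt3.
have D_le := dist_number_labelled_le q_lt3 card1 card2 card0 twin_q e_irr.
have sizes : #|T| <= 5 -> [/\ #|fiber q 0| = 1, #|fiber q 1| = 2 & #|fiber q 2| = 2].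
  by move=> le_n5; split; lia.
have e_q := labelled_complete cross indep e_irr.
split => [D_eq | [iso | [t [_ iso]]]].
- have n_le5 : #|T| <= 5 by lia.
  have [c1 a2 b2] := sizes n_le5.
  by left; apply: (complete_tripartite_iso q_lt3 (e_q c1)).
- have n5 : #|T| = 5 by rewrite (graph_iso_card iso) card_Ktri.
  have [c1 a2 b2] := sizes (eq_leq n5).
  have := complete_tripartite_dist_gt (e_q c1) (isT : 1 != 2) _ _ (has_dcol_dist_number e).
  by rewrite a2 b2 n5 => /(_ isT erefl) D_gt; apply/eqP; rewrite eqn_leq D_gt andbT; lia.
- by case: (not_iso_Ktri11 cross indep card1 card2 iso).
Qed.
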